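(* Let $\mathbf{C}$ be a category of $\mathbf{FI}$ type, let $M_\bullet,N_\bullet$ be free $\mathbf{C}$-modules over $\mathbb{C}$ of respective degrees $\leq c_1$ and $\leq c_2$, and let $X_\bullet\subseteq N_\bullet$ be any $\mathbf{C}$-submodule. Then the canonical extension maps $\Psi_d^e:\mathrm{Hom}_{G_d}(M_d,X_d)\to\mathrm{Hom}_{G_e}(M_e,X_e)$ are injective for all objects $e\geq d\geq c_1+c_2$.
   Context: A category $\mathbf{C}$ is of $\mathbf{FI}$ type if: (1) all Hom-sets are finite; (2) every morphism is a monomorphism and every endomorphism is an isomorphism; (3) for all objects $c,d$ the group $G_d=\mathrm{Aut}_{\mathbf{C}}(d)$ acts transitively on $\mathrm{Hom}_{\mathbf{C}}(c,d)$; (4) for every $d$ only finitely many isomorphism classes of $c$ have $\mathrm{Hom}(c,d)\neq\emptyset$; (5) every pair $c_1\to d\leftarrow c_2$ has a pullback, and every pair $f_i:p\to c_i$ has a weak push-out, i.e. a commutative pullback square $g_i:c_i\to d$ such that for every other pullback square $h_i:c_i\to z$ with $h_1f_1=h_2f_2$ there is a unique $h:d\to z$ with $hg_i=h_i$. Write $c\leq d$ if $\mathrm{Hom}(c,d)\neq\emptyset$. Write $d\geq c_1+c_2$ if $w\leq d$ for every weak push-out object $w$ of any pair of morphisms $p\to c_1$, $p\to c_2$. A $\mathbf{C}$-module is a functor to complex vector spaces. For a finite-dimensional $G_c$-representation $V$, $\mathrm{Ind}_c(V)$ is $d\mapsto\mathbb{C}[\mathrm{Hom}(c,d)]\otimes_{\mathbb{C}[G_c]}V$.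 A free module is a finite direct sum of these, of degree $\leq d$ if each summand $\mathrm{Ind}_c(V)$ ($V\neq0$) has $c\leq d$. For a free module $M$ and any module $X$, the spaces $\mathrm{Hom}_{G_d}(M_d,X_d)$ form a $\mathbf{C}$-module (functorial and left exact in $X$), obtained as the coinvariants $(M^*\otimes X)_d/G_d$ where $M^*=\bigoplus\mathrm{Ind}_{c_i}(V_i^* )$ for $M=\bigoplus\mathrm{Ind}_{c_i}(V_i)$; $\Psi_d^e$ denotes its structure map for $d\leq e$. *)

From HB Require Import structures.
From mathcomp Require Import all_boot all_order all_algebra.
From mathcomp Require Import reals complex.

Set Implicit Arguments.
Unset Strict Implicit.
Unset Printing Implicit Defensive.

Import GRing.Theory Num.Theory.
Local Open Scope ring_scope.

(* Categories with finite Mor-sets (axiom (1) of FI type is built in  *)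
(* by taking Mor-sets to be finTypes).                                *)
Record fcat := FCat {
  Obj : Type;
  Mor : Obj -> Obj -> finType;
  comp : forall a b c : Obj, Mor b c -> Mor a b -> Mor a c;
  idm : forall a : Obj, Mor a a;
  compA : forall (a b c d : Obj) (h : Mor c d) (g : Mor b c) (f : Mor a b),
      comp h (comp g f) = comp (comp h g) f;
  comp1m : forall (a b : Obj) (f : Mor a b), comp (idm b) f = f;
  compm1 : forall (a b : Obj) (f : Mor a b), comp f (idm a) = f
}.

Arguments comp {_ a b c} _ _.
Arguments idm {_} a.

Section FItype.
Variable C : fcat.

Definition leo (c d : Obj C) : Prop := inhabited (Mor c d).

Definition isIso (c d : Obj C) (f : Mor c d) : Prop :=
  exists g : Mor d c, comp g f = idm c /\ comp f g = idm d.

Definition isomorphic (c d : Obj C) : Prop := exists f : Mor c d, isIso f.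

Definition isPullback (p c1 c2 d : Obj C) (f1 : Mor p c1) (f2 : Mor p c2)
    (g1 : Mor c1 d) (g2 : Mor c2 d) : Prop :=
  comp g1 f1 = comp g2 f2 /\
  forall (q : Obj C) (u1 : Mor q c1) (u2 : Mor q c2),
    comp g1 u1 = comp g2 u2 ->
    exists u : Mor q p, [/\ comp f1 u = u1, comp f2 u = u2 &
       forall u' : Mor q p, comp f1 u' = u1 -> comp f2 u' = u2 -> u' = u].

Definition isWeakPushout (p c1 c2 w : Obj C) (f1 : Mor p c1) (f2 : Mor p c2)
    (g1 : Mor c1 w) (g2 : Mor c2 w) : Prop :=
  isPullback f1 f2 g1 g2 /\
  forall (z : Obj C) (h1 : Mor c1 z) (h2 : Mor c2 z),
    isPullback f1 f2 h1 h2 ->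
    exists h : Mor w z, [/\ comp h g1 = h1, comp h g2 = h2 &
       forall h' : Mor w z, comp h' g1 = h1 -> comp h' g2 = h2 -> h' = h].

Definition geSum (d c1 c2 : Obj C) : Prop :=
  forall (p w : Obj C) (f1 : Mor p c1) (f2 : Mor p c2)
         (g1 : Mor c1 w) (g2 : Mor c2 w),
    isWeakPushout f1 f2 g1 g2 -> leo w d.

Definition FI_type : Prop :=
  [/\ (forall (a b c : Obj C) (f : Mor b c) (g h : Mor a b),
         comp f g = comp f h -> g = h),
      (forall (d : Obj C) (g : Mor d d), isIso g),
  (* (3) G_d = Aut(d) = Mor(d,d) acts transitively on Hom(c,d) *)
      (forall (c d : Obj C) (f f' : Mor c d),
         exists s : Mor d d, comp s f = f'),
      (forall d : Obj C, exists (k : nat) (o : 'I_k -> Obj C),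
         forall c : Obj C, leo c d -> exists i : 'I_k, isomorphic c (o i)) &
      (forall (c1 c2 d : Obj C) (g1 : Mor c1 d) (g2 : Mor c2 d),
         exists (p : Obj C) (f1 : Mor p c1) (f2 : Mor p c2),
           isPullback f1 f2 g1 g2) /\
      (forall (p c1 c2 : Obj C) (f1 : Mor p c1) (f2 : Mor p c2),
         exists (w : Obj C) (g1 : Mor c1 w) (g2 : Mor c2 w),
           isWeakPushout f1 f2 g1 g2)].

End FItype.

(* A free module  M = (+)_{i in I} Ind_{c_i}(V_i)  is given by a finite *)
(* index type I, objects c_i, and finite-dimensional G_{c_i}-           *)
(* representations V_i = 'cV_(n_i) with matrices rho_i g (G_c = Mor c c,*)
(* all of whose elements are automorphisms by FI axiom (2)).            *)
(* Ind_c(V)_d = C[Hom(c,d)] (x)_{C[G_c]} V is modelled (canonically    *)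
(* isomorphically, since G_c acts freely on Hom(c,d)) as the space of  *)
(* functions F : Hom(c,d) -> V with F h = rho g *m F (h o g).           *)
Record freeMod (R : realType) (C : fcat) := FreeMod {
  fm_I : finType;
  fm_c : fm_I -> Obj C;
  fm_n : fm_I -> nat;
  fm_rho : forall i : fm_I, Mor (fm_c i) (fm_c i) -> 'M[R[i]]_(fm_n i);
  fm_rho1 : forall i, fm_rho (idm (fm_c i)) = 1%:M;
  fm_rhoM : forall i (g h : Mor (fm_c i) (fm_c i)),
      fm_rho (comp g h) = fm_rho g *m fm_rho h
}.

Arguments fm_I {R C} _.
Arguments fm_c {R C} _ i.
Arguments fm_n {R C} _ i.
Arguments fm_rho {R C} _ {i} _.

Section FreeModules.
Variables (R : realType) (C : fcat).
Local Notation CC := (R[i]).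

Definition fm_deg_le (M : freeMod R C) (c : Obj C) : Prop :=
  forall i : fm_I M, (0 < fm_n M i)%N -> leo (fm_c M i) c.

Definition melt (M : freeMod R C) (d : Obj C) : Type :=
  forall i : fm_I M, Mor (fm_c M i) d -> 'cV[CC]_(fm_n M i).

Definition inM (M : freeMod R C) (d : Obj C) (F : melt M d) : Prop :=
  forall (i : fm_I M) (h : Mor (fm_c M i) d) (g : Mor (fm_c M i) (fm_c M i)),
    F i h = fm_rho M g *m F i (comp h g).

Definition mzero (M : freeMod R C) (d : Obj C) : melt M d := fun i h => 0.
Definition madd (M : freeMod R C) (d : Obj C) (F G : melt M d) : melt M d :=
  fun i h => F i h + G i h.
Definition mscale (M : freeMod R C) (d : Obj C) (a : CC) (F : melt M d)
  : melt M d := fun i h => a *: F i h.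

(* the module structure map M(f) : M_d -> M_e for f : d -> e
   (on Ind_c(V): [h (x) v] |-> [f o h (x) v]) *)
Definition mact (M : freeMod R C) (d e : Obj C) (f : Mor d e) (F : melt M d)
  : melt M e :=
  fun i h' => match [pick h | comp f h == h'] with
              | Some h => F i h
              | None => 0
              end.

(* restriction along f : d -> e,  M_e -> M_d  (the transpose of M^*(f)) *)
Definition mres (M : freeMod R C) (d e : Obj C) (f : Mor d e) (F : melt M e)
  : melt M d := fun i h => F i (comp f h).

Definition isSubmodule (N : freeMod R C) (X : forall d : Obj C, melt N d -> Prop)
  : Prop :=
  [/\ (forall d F, X d F -> inM F),
      (forall d, X d (@mzero N d)),
      (forall d F G, X d F -> X d G -> X d (madd F G)),
      (forall d a F, X d F -> X d (mscale a F)) &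
      (forall d e (f : Mor d e) F, X d F -> X e (mact f F))].

Definition isGHom (M N : freeMod R C) (X : forall d : Obj C, melt N d -> Prop)
    (d : Obj C) (phi : melt M d -> melt N d) : Prop :=
  [/\ (forall F, inM F -> X d (phi F)),
      (forall a F G, inM F -> inM G ->
          phi (madd (mscale a F) G) = madd (mscale a (phi F)) (phi G)) &
      (forall (s : Mor d d) F, inM F -> phi (mact s F) = mact s (phi F))].

(* The canonical extension map  Psi_d^e : Hom_{G_d}(M_d,X_d) -> Hom_{G_e}(M_e,X_e),
   i.e. the structure map of the module (M^* (x) X)_./G_. transported to
   invariants:  phi |-> sum_{s in G_e} s . (X(f) o phi o M^*(f)^T) . s^{-1}
   for any f : d -> e (independent of f by transitivity). *)
Definition Psi (M N : freeMod R C) (d e : Obj C) (f : Mor d e)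
    (phi : melt M d -> melt N d) : melt M e -> melt N e :=
  fun F => \big[@madd N e/@mzero N e]_(st : (Mor e e * Mor e e)%type |
                                     comp st.1 st.2 == idm e)
             mact st.1 (mact f (phi (mres f (mact st.2 F)))).

End FreeModules.

(* Split F in M_d into its components G supported on a single G_{c_i}-orbit
   of some h : c_i -> d, and evaluate Psi(phi)(f_* G) at f o k.  The summand
   of Psi indexed by (s, t = s^-1) in G_e vanishes unless t maps both f o h
   and f o k into the image of f; in that case the pullback of h and k and
   its weak push-out give sigma in G_d with f o sigma o h = t o f o h and
   f o sigma o k = t o f o k, and G_d-equivariance turns the summand into
   phi(G)(k).  Hence Psi(phi)(f_* G)(f o k) = n * phi(G)(k) for some n >= 1
   (the pair (1, 1) counts) independent of phi. *)

From Pilot Require Import Defs.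
From HB Require Import structures.
From mathcomp Require Import all_boot all_order all_algebra.
From mathcomp Require Import reals complex.
From mathcomp Require boolp.
(* ssrfun also defines [comp] and [compA]; we mean the category's. *)
Import Defs.

Set Implicit Arguments.
Unset Strict Implicit.
Unset Printing Implicit Defensive.
Import GRing.Theory Num.Theory.
Local Open Scope ring_scope.

Section FIType.
Variables (C : fcat) (HFI : FI_type C).

Lemma compI (a b c : Obj C) (f : Mor b c) : injective (@comp C a b c f).
Proof. by case: HFI => mono _ _ _ _ g h; apply: mono. Qed.

Lemma endo_inv (a : Obj C) (s : Mor a a) :
  exists2 t : Mor a a, comp t s = idm a & comp s t = idm a.
Proof. by case: HFI => _ iso _ _ _; have [t []] := iso a s; exists t. Qed.

Lemma pullback_transport (p a b d e : Obj C) (f1 : Mor p a) (f2 : Mor p b)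
    (u v : Mor d e) (h h' : Mor a d) (k k' : Mor b d) :
  comp u h' = comp v h -> comp u k' = comp v k ->
  isPullback f1 f2 h k -> isPullback f1 f2 h' k'.
Proof.
move=> Eh Ek [comm univ]; split.
  by apply: (@compI _ _ _ u); rewrite !compA Eh Ek -!compA comm.
move=> q u1 u2 E; apply: univ; apply: (@compI _ _ _ v).
by rewrite !compA -Eh -Ek -!compA E.
Qed.

Lemma pullback_Aut_conj (p a b d : Obj C) (f1 : Mor p a) (f2 : Mor p b)
    (h h' : Mor a d) (k k' : Mor b d) :
  isPullback f1 f2 h k -> isPullback f1 f2 h' k' ->
  exists s : Mor d d, comp s h = h' /\ comp s k = k'.
Proof.
case: HFI => _ _ trans _ [_ pushout] pb pb'.
have [w [g1 [g2 [_ univ]]]] := pushout _ _ _ f1 f2.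
have [u [uh uk _]] := univ _ _ _ pb.
have [u' [uh' uk' _]] := univ _ _ _ pb'.
have [s su] := trans _ _ u u'.
by exists s; rewrite -uh -uk !compA su.
Qed.

Lemma Aut_lift_pair (a b d e : Obj C) (f : Mor d e) (t : Mor e e)
    (h h' : Mor a d) (k k' : Mor b d) :
  comp f h' = comp t (comp f h) -> comp f k' = comp t (comp f k) ->
  exists s : Mor d d, comp s h = h' /\ comp s k = k'.
Proof.
case: HFI => _ _ _ _ [pullback _] Eh Ek.
have [p [f1 [f2 pb]]] := pullback _ _ _ h k.
apply: (pullback_Aut_conj pb).
by apply: (pullback_transport (u := f) (v := comp t f)) pb; rewrite -compA.
Qed.

Definition factors_through (a b c : Obj C) (f : Mor b c) (y : Mor a c) : bool :=
  [exists x, comp f x == y].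

Lemma factors_through_comp (a b c : Obj C) (f : Mor b c) (x : Mor a b) :
  factors_through f (comp f x).
Proof. by apply/existsP; exists x. Qed.

Section Elements.
Variables (R : realType) (M : freeMod R C).
Local Notation CC := (R[i]).

Lemma melt_ext (d : Obj C) (F G : melt M d) : (forall i x, F i x = G i x) -> F = G.
Proof. by move=> E; do 2 apply: boolp.functional_extensionality_dep => ?; apply: E. Qed.

Variant mact_spec (d e : Obj C) (f : Mor d e) (Z : melt M d) i
    (y : Mor (fm_c M i) e) : 'cV[CC]_(fm_n M i) -> Prop :=
  | MactImage x of comp f x = y : mact_spec f Z y (Z i x)
  | MactOut of (forall x, comp f x != y) : mact_spec f Z y 0.

Lemma mactP (d e : Obj C) (f : Mor d e) (Z : melt M d) i (y : Mor (fm_c M i) e) :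
  mact_spec f Z y (mact f Z y).
Proof.
rewrite /mact; case: pickP => [x /eqP <-|out]; first exact: MactImage.
by apply: MactOut => x; rewrite out.
Qed.

Lemma mact_comp_at (d e : Obj C) (f : Mor d e) (Z : melt M d) i
    (x : Mor (fm_c M i) d) :
  mact f Z (comp f x) = Z i x.
Proof. by case: mactP => [x' /compI -> // | /(_ x)]; rewrite eqxx. Qed.

Lemma mact_iso (e : Obj C) (s t : Mor e e) (Z : melt M e) i (y : Mor (fm_c M i) e) :
  comp s t = idm e -> mact s Z y = Z i (comp t y).
Proof. by move=> st; rewrite -[in LHS](comp1m y) -st -compA mact_comp_at. Qed.

Lemma mact_comp (a b c : Obj C) (u : Mor b c) (v : Mor a b) (Z : melt M a) :
  mact u (mact v Z) = mact (comp u v) Z.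
Proof.
apply: melt_ext => i y; case: (mactP (comp u v) Z y) => [x <-|out].
  by rewrite -compA !mact_comp_at.
case: mactP => [z uz|//]; case: mactP => [x vx|//].
by move: (out x); rewrite -uz -vx compA eqxx.
Qed.

Lemma mres_mact (d e : Obj C) (f : Mor d e) (Z : melt M d) : mres f (mact f Z) = Z.
Proof. by apply: melt_ext => i x; rewrite /mres mact_comp_at. Qed.

Lemma inM_mzero (d : Obj C) : inM (mzero (M := M) (d := d)).
Proof. by move=> i h g; rewrite mulmx0. Qed.

Lemma inM_madd (d : Obj C) (F G : melt M d) : inM F -> inM G -> inM (madd F G).
Proof. by move=> HF HG i h g; rewrite /madd mulmxDr -HF -HG. Qed.

Lemma inM_mact (d e : Obj C) (f : Mor d e) (F : melt M d) :
  inM F -> inM (mact f F).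
Proof.
move=> HF i y g; case: (mactP f F y) => [x <-|out].
  by rewrite -compA mact_comp_at; apply: HF.
case: mactP => [x fx|]; last by rewrite mulmx0.
have [g' _ gg'] := endo_inv g.
by move: (out (comp x g')); rewrite compA fx -compA gg' compm1 eqxx.
Qed.

Lemma mscale1 (d : Obj C) (F : melt M d) : mscale 1 F = F.
Proof. by apply: melt_ext => i x; rewrite /mscale scale1r. Qed.

Lemma big_madd_apply (d : Obj C) (I : finType) (P : pred I)
    (G : I -> melt M d) i (x : Mor (fm_c M i) d) :
  (\big[@madd _ _ M d/@mzero _ _ M d]_(y | P y) G y) i x = \sum_(y | P y) G y i x.
Proof. by rewrite (big_morph (fun Z : melt M d => Z i x) (id1 := 0) (op1 := +%R)). Qed.

Section Orbits.
Variable d : Obj C.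
Local Notation point := {i : fm_I M & Mor (fm_c M i) d}.
Local Notation pt x := (Tagged (fun j => Mor (fm_c M j) d) x).

Definition morbit i (x : Mor (fm_c M i) d) : {set point} :=
  [set pt (comp x g) | g : Mor (fm_c M i) (fm_c M i)].

Definition morbits : {set {set point}} := [set morbit (tagged p) | p : point].

Definition mproj (O : {set point}) (F : melt M d) : melt M d :=
  fun i x => if morbit x == O then F i x else 0.

Lemma morbit_comp i (x : Mor (fm_c M i) d) (g : Mor (fm_c M i) (fm_c M i)) :
  morbit (comp x g) = morbit x.
Proof.
apply/setP => p; apply/imsetP/imsetP => [[g' _ ->]|[g' _ ->]].
  by exists (comp g g') => //; rewrite compA.
have [g'' _ gg''] := endo_inv g.
by exists (comp g'' g') => //; rewrite compA -(compA x g) gg'' compm1.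
Qed.

Lemma morbit_eq_ind i0 (x : Mor (fm_c M i0) d) i (h : Mor (fm_c M i) d)
    (P : forall j, Mor (fm_c M j) d -> Prop) :
  morbit x = morbit h -> (forall g, P i (comp h g)) -> P i0 x.
Proof.
move=> xh Ph; have : pt x \in morbit h.
  by rewrite -xh; apply/imsetP; exists (idm _); rewrite ?compm1.
case/imsetP=> g _ Exg.
by change (P (tag (pt x)) (tagged (pt x))); rewrite Exg; exact: Ph.
Qed.

Lemma eq_comp_morbit (e : Obj C) (u v : Mor d e) i (h : Mor (fm_c M i) d)
    i0 (x : Mor (fm_c M i0) d) :
  comp u h = comp v h -> morbit x = morbit h -> comp u x = comp v x.
Proof.
move=> uv /morbit_eq_ind E.
apply: (E (fun j (y : Mor (fm_c M j) d) => comp u y = comp v y)) => g.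
by rewrite !compA uv.
Qed.

Lemma inM_mproj (O : {set point}) (F : melt M d) : inM F -> inM (mproj O F).
Proof.
move=> HF i x g; rewrite /mproj morbit_comp; case: ifP => _; first exact: HF.
by rewrite mulmx0.
Qed.

Lemma mproj_sum (F : melt M d) :
  F = \big[@madd _ _ M d/@mzero _ _ M d]_(O in morbits) mproj O F.
Proof.
apply: melt_ext => i x; rewrite big_madd_apply (bigD1 (morbit x)) /=; last first.
  by apply/imsetP; exists (pt x).
rewrite {1}/mproj eqxx big1 ?addr0 // => O /andP [_ /negbTE xO].
by rewrite /mproj eq_sym xO.
Qed.

Section SingleOrbit.
Variables (i : fm_I M) (h : Mor (fm_c M i) d) (F : melt M d).
Local Notation G := (mproj (morbit h) F).

Lemma mact_mproj_image (e : Obj C) (u v : Mor d e) j (x : Mor (fm_c M j) d) :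
  comp u h = comp v h -> mact v G (comp u x) = G x.
Proof.
move=> uv; have [/eqP xO|xO] := boolP (morbit x == morbit h).
  by rewrite (eq_comp_morbit uv xO) mact_comp_at.
rewrite {2}/mproj (negbTE xO); case: mactP => [x' vx'|//].
rewrite /mproj; case: eqP => // x'O.
have x'x : x' = x by apply: (@compI _ _ _ u); rewrite (eq_comp_morbit uv x'O).
by move: xO; rewrite -x'x x'O eqxx.
Qed.

Lemma mact_mproj_eq (e : Obj C) (u v : Mor d e) :
  comp u h = comp v h -> mact u G = mact v G.
Proof.
move=> uv; apply: melt_ext => j y; case: (mactP u G y) => [x <-|nu].
  by rewrite mact_mproj_image.
case: mactP => [x vx|//]; rewrite -(mact_mproj_image _ (esym uv)) vx.
by case: mactP => // x' ux'; move: (nu x'); rewrite ux' eqxx.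
Qed.

Lemma mres_mact_mproj (e : Obj C) (f u : Mor d e) (s : Mor d d) :
  comp u h = comp f (comp s h) -> mres f (mact u G) = mact s G.
Proof.
move=> E; have E' : comp u h = comp (comp f s) h by rewrite -compA.
by rewrite (mact_mproj_eq E') -mact_comp mres_mact.
Qed.

Lemma mres_mact_mproj_eq0 (e : Obj C) (f u : Mor d e) :
  ~~ factors_through f (comp u h) -> mres f (mact u G) = @mzero _ _ M d.
Proof.
move=> nf; apply: melt_ext => j x; rewrite /mres.
case: mactP => [y uy|//]; rewrite /mproj; case: eqP => // yO; exfalso.
move: x uy; apply: (morbit_eq_ind (P := fun j (y : Mor (fm_c M j) d) =>
  forall x : Mor (fm_c M j) d, comp u y = comp f x -> False) yO) => g x E.
have [g' _ gg'] := endo_inv g.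
move/negP: nf; apply; apply/existsP; exists (comp x g'); apply/eqP.
by rewrite compA -E -!compA gg' compm1.
Qed.

End SingleOrbit.
End Orbits.
End Elements.

Section GHom.
Variables (R : realType) (M N : freeMod R C).
Variables (X : forall d : Obj C, melt N d -> Prop) (d : Obj C).
Variables (phi : melt M d -> melt N d) (phiG : isGHom X phi).

Lemma GHom_add (F G : melt M d) :
  inM F -> inM G -> phi (madd F G) = madd (phi F) (phi G).
Proof.
case: phiG => _ lin _ HF HG.
by have := lin 1 F G HF HG; rewrite !mscale1.
Qed.

Lemma GHom0 : phi (@mzero _ _ M d) = @mzero _ _ N d.
Proof.
have := GHom_add (@inM_mzero _ M d) (@inM_mzero _ M d).
have -> : madd (@mzero _ _ M d) (@mzero _ _ M d) = @mzero _ _ M d.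
  by apply: melt_ext => i x; rewrite /madd addr0.
move=> E; apply: melt_ext => i x; have := congr1 (fun Z : melt N d => Z i x) E.
rewrite /madd => Ex; apply: (addrI (phi (@mzero _ _ M d) x)).
by rewrite -Ex /mzero addr0.
Qed.

Lemma GHom_sum (I : finType) (P : pred I) (G : I -> melt M d) :
  (forall y, inM (G y)) ->
  phi (\big[@madd _ _ M d/@mzero _ _ M d]_(y | P y) G y)
  = \big[@madd _ _ N d/@mzero _ _ N d]_(y | P y) phi (G y).
Proof.
move=> HG; apply: proj2 (big_rec2 (fun F Z => inM F /\ phi F = Z) _ _).
  by split; [exact: inM_mzero | exact: GHom0].
by move=> y F _ _ [HF <-]; split; [exact: inM_madd | exact: GHom_add].
Qed.

End GHom.

Section PsiInjective.
Variables (R : realType) (M N : freeMod R C).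
Variables (X : forall d : Obj C, melt N d -> Prop) (d e : Obj C) (f : Mor d e).

Definition Psi_weight i (h : Mor (fm_c M i) d) j (k : Mor (fm_c N j) d) : nat :=
  #|[pred st : Mor e e * Mor e e | [&& comp st.1 st.2 == idm e,
      factors_through f (comp st.2 (comp f h))
    & factors_through f (comp st.2 (comp f k))]]|.

Lemma Psi_weight_gt0 i (h : Mor (fm_c M i) d) j (k : Mor (fm_c N j) d) :
  (0 < Psi_weight h k)%N.
Proof.
apply/card_gt0P; exists (idm e, idm e).
by rewrite inE /= !comp1m eqxx !factors_through_comp.
Qed.

Section Term.
Variables (phi : melt M d -> melt N d) (phiG : isGHom X phi).
Variables (i : fm_I M) (h : Mor (fm_c M i) d) (F : melt M d) (HF : inM F).
Local Notation G := (mproj (morbit h) F).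

Lemma Psi_term (s t : Mor e e) j (k : Mor (fm_c N j) d) : comp s t = idm e ->
  mact s (mact f (phi (mres f (mact t (mact f G))))) (comp f k)
  = if factors_through f (comp t (comp f h)) && factors_through f (comp t (comp f k))
    then phi G k else 0.
Proof.
move=> st; rewrite (mact_iso _ _ st).
case: (boolP (factors_through f (comp t (comp f k)))) => [/existsP [k1 /eqP fk1]|nfk].
  rewrite andbT -fk1 mact_comp_at (mact_comp t f).
  case: (boolP (factors_through f (comp t (comp f h)))) => [/existsP [h1 /eqP fh1]|nfh].
    have [sg [sgh sgk]] := Aut_lift_pair fh1 fk1.
    have tfh : comp (comp t f) h = comp f (comp sg h) by rewrite -compA -fh1 sgh.
    rewrite (mres_mact_mproj _ tfh).
    by case: phiG => _ _ ->; [rewrite -sgk mact_comp_at | exact: inM_mproj].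
  by rewrite mres_mact_mproj_eq0 ?(GHom0 phiG) // -compA.
rewrite andbF; case: mactP => // k1 fk1.
by move: nfk; rewrite -fk1 factors_through_comp.
Qed.

Lemma Psi_mact_mproj j (k : Mor (fm_c N j) d) :
  Psi f phi (mact f G) (comp f k) = (Psi_weight h k)%:R *: phi G k.
Proof.
rewrite /Psi big_madd_apply.
under eq_bigr => st /eqP st1 do rewrite (Psi_term _ st1).
rewrite -big_mkcondr scaler_nat -sumr_const.
by apply: eq_bigl => st; rewrite inE.
Qed.

End Term.

Lemma Psi_inj (phi1 phi2 : melt M d -> melt N d) :
  isGHom X phi1 -> isGHom X phi2 ->
  (forall F, inM F -> Psi f phi1 F = Psi f phi2 F) ->
  forall F, inM F -> phi1 F = phi2 F.
Proof.
move=> phi1G phi2G Psi12 F HF.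
have projF O : inM (mproj O F) by exact: inM_mproj.
rewrite (mproj_sum F) (GHom_sum phi1G _ projF) (GHom_sum phi2G _ projF).
apply: eq_bigr => _ /imsetP [[i h] _ ->] /=; apply: melt_ext => j k.
have := Psi12 _ (inM_mact f (projF (morbit h))).
move/(congr1 (fun Z : melt N e => Z j (comp f k))).
rewrite /= !Psi_mact_mproj //; apply: scalerI.
by rewrite pnatr_eq0 -lt0n Psi_weight_gt0.
Qed.

End PsiInjective.
End FIType.

Theorem mainTheorem16 (R : realType) (C : fcat) (HFI : FI_type C)
    (M N : freeMod R C) (c1 c2 : Obj C)
    (HM : fm_deg_le M c1) (HN : fm_deg_le N c2)
    (X : forall d : Obj C, melt N d -> Prop) (HX : isSubmodule X)
    (d e : Obj C) (f : Mor d e) (Hd : geSum d c1 c2)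
    (phi1 phi2 : melt M d -> melt N d) :
  isGHom X phi1 -> isGHom X phi2 ->
  (forall F : melt M e, inM F -> Psi f phi1 F = Psi f phi2 F) ->
  forall F : melt M d, inM F -> phi1 F = phi2 F.
Proof. exact: (Psi_inj HFI). Qed.
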